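(* Let $p$ be a prime and $k\geq 0$. Then $A_1(H)$ contains an element of order $p^k$ if and only if $H$ contains an element of order $p^k$.
   Context: Let $H$ be a group and $\{F_i\}_{i\in I}$ the set of all finitely generated abelian subgroups of $H$; let $C_i=C_H(F_i)$. Write $\Delta_K=\{(k,k):k\in K\}$ and $\Delta'_F=\{(f^{-1},f):f\in F\}$ in $H\times H$. $A_1(H)$ is the generalized HNN extension of $H\times H$ with stable letters $t_i$ ($i\in I$) and relations $(k,fk)=t_i(f^{-1},fk)t_i^{-1}$ for all $f\in F_i$, $k\in C_i$ (identifying $(1\times F_i)\cdot\Delta_{C_i}\cong\Delta'_{F_i}\cdot(1\times C_i)$ via $(k,fk)\mapsto(f^{-1},fk)$). *)

From Stdlib Require Import List.
From mathcomp Require Import all_boot.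
Set Implicit Arguments. Unset Strict Implicit.

Record AGroup := {
  gcar :> Type;
  gmul : gcar -> gcar -> gcar;
  gone : gcar;
  ginv : gcar -> gcar;
  gmulA : forall x y z, gmul x (gmul y z) = gmul (gmul x y) z;
  gmul1 : forall x, gmul gone x = x;
  gmulV : forall x, gmul (ginv x) x = gone
}.

Section Defs.
Variable H : AGroup.
Local Notation "x * y" := (gmul x y).
Local Notation "1" := (gone H).

Fixpoint gpow (x : H) (n : nat) : H :=
  match n with O => 1 | S n' => x * gpow x n' end.

Definition has_order (x : H) (n : nat) : Prop :=
  0 < n /\ gpow x n = 1 /\ (forall m, 0 < m -> m < n -> gpow x m <> 1).

Inductive gen_by (l : seq H) : H -> Prop :=
| gen_in x : List.In x l -> gen_by l x
| gen_one : gen_by l 1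
| gen_mul x y : gen_by l x -> gen_by l y -> gen_by l (x * y)
| gen_inv x : gen_by l x -> gen_by l (ginv x).

Definition fg_abelian_subgroup (S : H -> Prop) : Prop :=
  (exists l : seq H, forall x, S x <-> gen_by l x) /\
  (forall x y, S x -> S y -> x * y = y * x).

Definition FGA := { S : H -> Prop | fg_abelian_subgroup S }.

Definition centralizer (S : H -> Prop) (k : H) : Prop :=
  forall f, S f -> f * k = k * f.

(** Generators of A_1(H): elements (a,b) of H x H, stable letters t_i and t_i^{-1}. *)
Inductive A1_letter :=
| LH (a b : H)
| LT (i : FGA)
| LTi (i : FGA).

Definition A1_word := seq A1_letter.

(** Defining relations of A_1(H) (relators of H x H, of the free stable letters,
    and the HNN relations  t_i (f^-1, f k) t_i^-1 = (k, f k), f in F_i, k in C_i). *)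
Inductive A1_rel : A1_word -> A1_word -> Prop :=
| rel_HH a b c d : A1_rel [:: LH a b; LH c d] [:: LH (a * c) (b * d)]
| rel_H1 : A1_rel [:: LH 1 1] [::]
| rel_TTi i : A1_rel [:: LT i; LTi i] [::]
| rel_TiT i : A1_rel [:: LTi i; LT i] [::]
| rel_HNN (i : FGA) f k :
    proj1_sig i f -> centralizer (proj1_sig i) k ->
    A1_rel [:: LT i; LH (ginv f) (f * k); LTi i] [:: LH k (f * k)].

Inductive A1_eq : A1_word -> A1_word -> Prop :=
| A1_refl w : A1_eq w w
| A1_sym u v : A1_eq u v -> A1_eq v u
| A1_trans u v w : A1_eq u v -> A1_eq v w -> A1_eq u w
| A1_ctx x u v y : A1_rel u v -> A1_eq (x ++ u ++ y) (x ++ v ++ y).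

Fixpoint A1_pow (w : A1_word) (n : nat) : A1_word :=
  match n with O => [::] | S n' => w ++ A1_pow w n' end.

Definition A1_has_order (w : A1_word) (n : nat) : Prop :=
  0 < n /\ A1_eq (A1_pow w n) [::] /\
  (forall m, 0 < m -> m < n -> ~ A1_eq (A1_pow w m) [::]).

End Defs.

(* A_1(H) is an HNN extension of H x H with stable letters t_i.  Letting words act on
   normal forms (van der Waerden's trick) shows that H x H embeds in A_1(H) and gives
   Britton's lemma: a word t^e1 g1 ... t^en gn with n > 0 containing no pinch
   t_i^e g t_i^-e (g in the associated subgroup) is nontrivial.  Removing a pinch or
   rotating a word cyclically does not change which of its powers are trivial, and
   the powers of a nonempty cyclically reduced word stay reduced, hence nontrivial.
   So a word of finite order has the same trivial powers as some (a, b) in H x H, and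
   if (a, b) has order p^k then so does a or b. *)

From mathcomp Require Import all_boot.
From Stdlib Require Import Classical ClassicalEpsilon FunctionalExtensionality PropExtensionality.
Set Implicit Arguments. Unset Strict Implicit.

Local Notation "x ** y" := (gmul x y) (at level 40, left associativity).
Local Notation "x ^-1" := (ginv x).

Section GroupTheory.
Variable G : AGroup.
Local Notation "1" := (gone G).
Implicit Types x y z : G.

Lemma mulgV x : x ** x^-1 = 1.
Proof.
by rewrite -[LHS]gmul1 -[X in X ** _](gmulV x^-1) -gmulA (gmulA x^-1) gmulV gmul1 gmulV.
Qed.

Lemma mulg1 x : x ** 1 = x.
Proof. by rewrite -(gmulV x) gmulA mulgV gmul1. Qed.

Lemma mulgI x : injective (gmul x).
Proof. by move=> y z e; rewrite -[y]gmul1 -(gmulV x) -gmulA e gmulA gmulV gmul1. Qed.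

Lemma invgK : involutive (@ginv G).
Proof. by move=> x; apply: (@mulgI x^-1); rewrite mulgV gmulV. Qed.

Lemma invMg x y : (x ** y)^-1 = y^-1 ** x^-1.
Proof. by apply: (@mulgI (x ** y)); rewrite mulgV -gmulA (gmulA y) mulgV gmul1 mulgV. Qed.

Lemma invg1 : 1^-1 = 1.
Proof. by rewrite -[RHS](gmulV 1) mulg1. Qed.

Lemma commuteV x y : x ** y = y ** x -> x^-1 ** y^-1 = y^-1 ** x^-1.
Proof. by move=> xy; rewrite -!invMg xy. Qed.

Lemma commuteVr x y : x ** y = y ** x -> x ** y^-1 = y^-1 ** x.
Proof.
by move=> xy; apply: (@mulgI y); rewrite gmulA -xy -gmulA mulgV mulg1 gmulA mulgV gmul1.
Qed.

Lemma gpow1n n : gpow 1 n = 1.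
Proof. by elim: n => //= n ->; rewrite gmul1. Qed.

Lemma gpowD x m n : gpow x (m + n) = gpow x m ** gpow x n.
Proof. by elim: m => [|m IH] /=; rewrite ?gmul1 // IH gmulA. Qed.

Lemma gpowM_eq1 x m q : gpow x m = 1 -> gpow x (m * q) = 1.
Proof. by move=> xm; elim: q => [|q IH]; rewrite ?muln0 // mulnS gpowD xm IH gmul1. Qed.

Lemma gpow_gcdn_eq1 x m n : gpow x m = 1 -> gpow x n = 1 -> gpow x (gcdn m n) = 1.
Proof.
elim/ltn_ind: m n => m IH n xm xn; case: (posnP m) => [-> | m_gt0]; first by rewrite gcd0n.
rewrite gcdnE (negbTE (lt0n_neq0 m_gt0)); apply: IH; rewrite ?ltn_pmod //.
by move: xn; rewrite {1}(divn_eq n m) gpowD mulnC gpowM_eq1 // gmul1.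
Qed.

Lemma has_order_pfactor x p k : prime p ->
  gpow x (p ^ k.+1) = 1 -> gpow x (p ^ k) <> 1 -> has_order x (p ^ k.+1).
Proof.
move=> p_pr x_pk1 x_pk; split; first by rewrite expn_gt0 prime_gt0.
split=> // m m_gt0 m_lt xm; apply: x_pk.
have/(dvdn_pfactor _ _ p_pr) [j _ def_gcd] := dvdn_gcdr m (p ^ k.+1).
have j_lt : j < k.+1.
  rewrite -(ltn_exp2l _ _ (prime_gt1 p_pr)) -def_gcd.
  exact: leq_ltn_trans (dvdn_leq m_gt0 (dvdn_gcdl _ _)) m_lt.
by rewrite -(subnKC (j_lt : j <= k)) expnD -def_gcd gpowM_eq1 // gpow_gcdn_eq1.
Qed.

Lemma pair_order_pfactor x y p k : prime p ->
  gpow x (p ^ k) = 1 -> gpow y (p ^ k) = 1 ->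
  (forall m, 0 < m -> m < p ^ k -> ~ (gpow x m = 1 /\ gpow y m = 1)) ->
  exists z, has_order z (p ^ k).
Proof.
move=> p_pr x_pk y_pk pk_min; case: k => [|k] in x_pk y_pk pk_min *.
  by exists 1; split=> //; split=> [|[|m] //]; rewrite /= gmul1.
have pk_gt0 : 0 < p ^ k by rewrite expn_gt0 prime_gt0.
have pk_lt : p ^ k < p ^ k.+1 by rewrite ltn_exp2l // prime_gt1.
have [x_k | x_k] := classic (gpow x (p ^ k) = 1); last by exists x; apply: has_order_pfactor.
by exists y; apply: has_order_pfactor => // y_k; apply: (pk_min _ pk_gt0 pk_lt).
Qed.

End GroupTheory.

Section Words.
Variable H : AGroup.
Implicit Types u v w x y : A1_word H.

Lemma A1_eq_ctx x u v y : A1_eq u v -> A1_eq (x ++ u ++ y) (x ++ v ++ y).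
Proof.
elim=> {u v} [u | u v _ IH | u v w _ IH1 _ IH2 | x' u v y' uv].
- exact: A1_refl.
- exact: A1_sym.
- exact: A1_trans IH1 IH2.
- by have := A1_ctx (x ++ x') (y' ++ y) uv; rewrite !catA -!(catA (x ++ x')) -!catA.
Qed.

Lemma A1_eq_catl x u v : A1_eq u v -> A1_eq (x ++ u) (x ++ v).
Proof. by move/(A1_eq_ctx x [::]); rewrite !cats0. Qed.

Lemma A1_eq_catr y u v : A1_eq u v -> A1_eq (u ++ y) (v ++ y).
Proof. exact: (@A1_eq_ctx [::] u v y). Qed.

Lemma A1_eq_cat u v u' v' : A1_eq u v -> A1_eq u' v' -> A1_eq (u ++ u') (v ++ v').
Proof. by move=> uv uv'; apply: A1_trans (A1_eq_catr _ uv) (A1_eq_catl _ uv'). Qed.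

Lemma A1_rel_eq u v : A1_rel u v -> A1_eq u v.
Proof. by move/(A1_ctx [::] [::]); rewrite /= !cats0. Qed.

Definition A1_letter_inv (l : A1_letter H) : A1_letter H :=
  match l with LH a b => LH a^-1 b^-1 | LT i => LTi i | LTi i => LT i end.

Definition A1_inv u : A1_word H := rev (map A1_letter_inv u).

Lemma A1_letter_invr l : A1_eq [:: l; A1_letter_inv l] [::].
Proof.
case: l => [a b|i|i] /=; try exact/A1_rel_eq/rel_TTi; try exact/A1_rel_eq/rel_TiT.
by apply: A1_trans (A1_rel_eq (rel_HH _ _ _ _)) _; rewrite !mulgV; exact: A1_rel_eq (rel_H1 H).
Qed.

Lemma A1_invr u : A1_eq (u ++ A1_inv u) [::].
Proof.
elim: u => [|l u IH] /=; first exact: A1_refl.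
rewrite /A1_inv /= rev_cons -cats1 -/(A1_inv u).
have := A1_eq_ctx [:: l] [:: A1_letter_inv l] IH; rewrite /= -catA => /A1_trans; apply.
exact: A1_letter_invr.
Qed.

Definition pow_eq1 u m : Prop := A1_eq (A1_pow u m) [::].

Definition same_exponents u v : Prop := forall m, pow_eq1 u m <-> pow_eq1 v m.

Definition torsion u : Prop := exists2 m, 0 < m & pow_eq1 u m.

Lemma A1_eq_pow u v m : A1_eq u v -> A1_eq (A1_pow u m) (A1_pow v m).
Proof. by move=> uv; elim: m => [|m IH] /=; [exact: A1_refl | exact: A1_eq_cat]. Qed.

Lemma A1_eq_same_exponents u v : A1_eq u v -> same_exponents u v.
Proof.
move=> uv m; split; apply: A1_trans; [exact: A1_eq_pow (A1_sym uv) | exact: A1_eq_pow].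
Qed.

Lemma pow_eq1_rot u v m : pow_eq1 (u ++ v) m -> pow_eq1 (v ++ u) m.
Proof.
have pow_rot : v ++ A1_pow (u ++ v) m = A1_pow (v ++ u) m ++ v.
  by elim: m => [|m IH] /=; rewrite ?cats0 // -!catA IH.
move=> uv_m; apply: (@A1_trans _ _ (v ++ A1_pow (u ++ v) m ++ A1_inv v)).
  rewrite catA pow_rot -catA -{1}[A1_pow _ m]cats0.
  exact/A1_eq_catl/A1_sym/A1_invr.
exact: A1_trans (A1_eq_ctx v (A1_inv v) uv_m) (A1_invr v).
Qed.

Lemma same_exponents_rot u v : same_exponents (u ++ v) (v ++ u).
Proof. by move=> m; split; apply: pow_eq1_rot. Qed.

End Words.

Section ProdGroup.
Variable H : AGroup.

Definition prod_group : AGroup.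
Proof.
refine (@Build_AGroup (H * H) (fun x y => (x.1 ** y.1, x.2 ** y.2)) (gone H, gone H)
          (fun x => (x.1^-1, x.2^-1)) _ _ _).
- by move=> [a b] [c d] [e f] /=; rewrite !gmulA.
- by move=> [a b] /=; rewrite !gmul1.
- by move=> [a b] /=; rewrite !gmulV.
Defined.

Lemma prod_mulE (x y : prod_group) : x ** y = (x.1 ** y.1, x.2 ** y.2).
Proof. by []. Qed.

Lemma prod_invE (x : prod_group) : x^-1 = (x.1^-1, x.2^-1).
Proof. by []. Qed.

Lemma prod_oneE : gone prod_group = (gone H, gone H).
Proof. by []. Qed.

End ProdGroup.

Arguments gmul : simpl never.
Arguments ginv : simpl never.
Arguments gone : simpl never.

Section RcosetRepr.
Variables (G : AGroup) (S : G -> Prop).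
Local Notation "1" := (gone G).

(* A right transversal of S which represents the coset S itself by 1. *)
Definition rcoset_repr (x : G) : G :=
  if excluded_middle_informative (S x) then 1
  else epsilon (inhabits 1) (fun r => S (r ** x^-1)).

Hypothesis S1 : S 1.
Hypothesis SM : forall x y, S x -> S y -> S (x ** y).
Hypothesis SV : forall x, S x -> S x^-1.

Lemma subg_cancelr x y : S y -> S (x ** y) -> S x.
Proof. by move=> Sy /SM /(_ (SV Sy)); rewrite -gmulA mulgV mulg1. Qed.

Lemma subg_cancell x y : S x -> S (x ** y) -> S y.
Proof. by move=> /SV Sx /(SM Sx); rewrite gmulA gmulV gmul1. Qed.

Lemma rcoset_reprP x : S (x ** (rcoset_repr x)^-1).
Proof.
rewrite /rcoset_repr; case: excluded_middle_informative => Sx; first by rewrite invg1 mulg1.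
have /SV : S (epsilon (inhabits 1) (fun r => S (r ** x^-1)) ** x^-1).
  apply: (epsilon_spec (inhabits 1) (fun r => S (r ** x^-1))); by exists x; rewrite mulgV.
by rewrite invMg invgK.
Qed.

Lemma rcoset_repr_id x : S x -> rcoset_repr x = 1.
Proof. by rewrite /rcoset_repr; case: excluded_middle_informative. Qed.

Lemma rcoset_repr_eq1 x : rcoset_repr x = 1 -> S x.
Proof. by move=> rx; have := rcoset_reprP x; rewrite rx invg1 mulg1. Qed.

Lemma rcoset_reprM s x : S s -> rcoset_repr (s ** x) = rcoset_repr x.
Proof.
move=> Ss; rewrite /rcoset_repr.
have S_sx : S (s ** x) <-> S x by split=> [/(subg_cancell Ss) | /(SM Ss)].
have -> : (fun r => S (r ** (s ** x)^-1)) = (fun r => S (r ** x^-1)).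
  apply: functional_extensionality => r; apply: propositional_extensionality.
  rewrite invMg gmulA; split=> [/(subg_cancelr (SV Ss)) // | Srx]; exact: SM Srx (SV Ss).
by do 2!case: excluded_middle_informative => ? //=; exfalso; tauto.
Qed.

Lemma rcoset_repr_idem x : rcoset_repr (rcoset_repr x) = rcoset_repr x.
Proof.
have def_r : rcoset_repr x = (x ** (rcoset_repr x)^-1)^-1 ** x.
  by rewrite invMg invgK -gmulA gmulV mulg1.
by rewrite {1}def_r rcoset_reprM //; apply/SV/rcoset_reprP.
Qed.

End RcosetRepr.

Section HNNData.
Variable H : AGroup.
Local Notation G := (prod_group H).
Local Notation "1" := (gone G).
Implicit Types (i : FGA H) (e : bool) (p q x y : G).

Lemma fga1 i : proj1_sig i (gone H).
Proof. by case: i => S [[l Sl] ?]; apply/Sl/gen_one. Qed.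

Lemma fgaM i f g : proj1_sig i f -> proj1_sig i g -> proj1_sig i (f ** g).
Proof. by case: i => S [[l Sl] ?] /= /Sl Sf /Sl Sg; apply/Sl/gen_mul. Qed.

Lemma fgaV i f : proj1_sig i f -> proj1_sig i f^-1.
Proof. by case: i => S [[l Sl] ?] /= /Sl Sf; apply/Sl/gen_inv. Qed.

Lemma fga_comm i f g : proj1_sig i f -> proj1_sig i g -> f ** g = g ** f.
Proof. by case: i => S [? S_comm]; apply: S_comm. Qed.

Definition hnn_par i p : Prop := proj1_sig i p.1 /\ centralizer (proj1_sig i) p.2.

(* [hnn_emb true] and [hnn_emb false] parametrise Delta'_{F_i} (1 x C_i) and
   (1 x F_i) Delta_{C_i} by the pairs p = (f, k) with f in F_i and k in C_i; the
   defining relation of A_1(H) reads t_i (hnn_emb true p) t_i^-1 = hnn_emb false p. *)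
Definition hnn_emb e p : G := if e then (p.1^-1, p.1 ** p.2) else (p.2, p.1 ** p.2).

Definition hnn_unemb e x : G := if e then (x.1^-1, x.1 ** x.2) else (x.2 ** x.1^-1, x.1).

Definition hnn_assoc i e x : Prop := hnn_par i (hnn_unemb e x).

Definition hnn_iso e x : G := hnn_emb (~~ e) (hnn_unemb e x).

Lemma hnn_par1 i : hnn_par i 1.
Proof. by split=> [|f _ /=]; rewrite ?gmul1 ?mulg1 //; apply: fga1. Qed.

Lemma hnn_parM i p q : hnn_par i p -> hnn_par i q -> hnn_par i (p ** q).
Proof.
move=> [Fp Cp] [Fq Cq]; split=> [|f Ff /=]; first exact: fgaM.
by rewrite gmulA Cp // -!gmulA Cq.
Qed.

Lemma hnn_parV i p : hnn_par i p -> hnn_par i p^-1.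
Proof. by move=> [Fp Cp]; split=> [|f Ff /=]; [apply: fgaV | apply/commuteVr/Cp]. Qed.

Lemma hnn_unembK e : cancel (hnn_emb e) (hnn_unemb e).
Proof.
by case: e => -[f k]; rewrite /= ?invgK ?gmulA ?gmulV ?gmul1 // -gmulA mulgV mulg1.
Qed.

Lemma hnn_embK e : cancel (hnn_unemb e) (hnn_emb e).
Proof.
by case: e => -[a b]; rewrite /= ?invgK; [rewrite gmulA gmulV gmul1 | rewrite -gmulA gmulV mulg1].
Qed.

Lemma hnn_embM i e p q : hnn_par i p -> hnn_par i q ->
  hnn_emb e (p ** q) = hnn_emb e p ** hnn_emb e q.
Proof.
case: p q => [f k] [f' k'] [Ff Ck] [Ff' _].
have kf' : f' ** k = k ** f' by rewrite Ck.
have e2 : f ** f' ** (k ** k') = f ** k ** (f' ** k').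
  by rewrite -!gmulA (gmulA f' k) kf' -gmulA.
by case: e; rewrite !prod_mulE /= e2 // invMg (commuteV (fga_comm Ff' Ff)).
Qed.

Lemma hnn_embV i e p : hnn_par i p -> hnn_emb e p^-1 = (hnn_emb e p)^-1.
Proof.
case: p => [f k] [Ff Ck]; have kf : f ** k = k ** f by rewrite Ck.
by case: e; rewrite !prod_invE /= invMg (commuteV kf).
Qed.

Lemma hnn_unembM i e x y : hnn_assoc i e x -> hnn_assoc i e y ->
  hnn_unemb e (x ** y) = hnn_unemb e x ** hnn_unemb e y.
Proof.
by move=> Ax Ay; rewrite -{1}(hnn_embK e x) -{1}(hnn_embK e y) -(hnn_embM e Ax Ay) hnn_unembK.
Qed.

Lemma hnn_assoc1 i e : hnn_assoc i e 1.
Proof. by case: e; rewrite /hnn_assoc /hnn_unemb /= ?invg1 gmul1; apply: hnn_par1. Qed.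

Lemma hnn_assocM i e x y : hnn_assoc i e x -> hnn_assoc i e y -> hnn_assoc i e (x ** y).
Proof. by move=> Ax Ay; rewrite /hnn_assoc (hnn_unembM Ax Ay); apply: hnn_parM. Qed.

Lemma hnn_assocV i e x : hnn_assoc i e x -> hnn_assoc i e x^-1.
Proof.
by move=> Ax; rewrite /hnn_assoc -{1}(hnn_embK e x) -(hnn_embV e Ax) hnn_unembK; apply: hnn_parV.
Qed.

Lemma hnn_assoc_iso i e x : hnn_assoc i (~~ e) (hnn_iso e x) = hnn_assoc i e x.
Proof. by rewrite /hnn_assoc /hnn_iso hnn_unembK. Qed.

Lemma hnn_isoK e : cancel (hnn_iso e) (hnn_iso (~~ e)).
Proof. by move=> x; rewrite /hnn_iso hnn_unembK negbK hnn_embK. Qed.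

Lemma hnn_isoKV e : cancel (hnn_iso (~~ e)) (hnn_iso e).
Proof. by move=> x; rewrite -[in hnn_iso e](negbK e) hnn_isoK. Qed.

Lemma hnn_isoM i e x y : hnn_assoc i e x -> hnn_assoc i e y ->
  hnn_iso e (x ** y) = hnn_iso e x ** hnn_iso e y.
Proof. by move=> Ax Ay; rewrite /hnn_iso (hnn_unembM Ax Ay) (hnn_embM _ Ax Ay). Qed.

End HNNData.

Section NormalForms.
Variable H : AGroup.
Local Notation G := (prod_group H).
Local Notation "1" := (gone G).
Implicit Types (i : FGA H) (e : bool) (x g r : G).

Definition hnn_repr i e x : G := rcoset_repr (hnn_assoc i e) x.

Lemma hnn_reprP i e x : hnn_assoc i e (x ** (hnn_repr i e x)^-1).
Proof. exact: rcoset_reprP (hnn_assoc1 i e) (@hnn_assocV _ i e) x. Qed.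

Lemma hnn_repr_id i e x : hnn_assoc i e x -> hnn_repr i e x = 1.
Proof. exact: rcoset_repr_id. Qed.

Lemma hnn_repr_eq1 i e x : hnn_repr i e x = 1 -> hnn_assoc i e x.
Proof. exact: (rcoset_repr_eq1 (hnn_assoc1 i e) (@hnn_assocV _ i e) (x := x)). Qed.

Lemma hnn_reprM i e s x : hnn_assoc i e s -> hnn_repr i e (s ** x) = hnn_repr i e x.
Proof. exact: (rcoset_reprM (@hnn_assocM _ i e) (@hnn_assocV _ i e) x). Qed.

Lemma hnn_repr_idem i e x : hnn_repr i e (hnn_repr i e x) = hnn_repr i e x.
Proof. exact: (rcoset_repr_idem (hnn_assoc1 i e) (@hnn_assocM _ i e) (@hnn_assocV _ i e) x). Qed.

(* [(g, [:: (i1, e1, r1); ...; (in, en, rn)])] stands for g t_i1^e1 r1 ... t_in^en rn. *)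
Definition syllables := seq (FGA H * bool * G).
Definition nform := (G * syllables)%type.

Definition cancels i e r (L : syllables) : Prop :=
  r = 1 /\ if L is (j, e', _) :: _ then j = i /\ e' = ~~ e else False.

Definition head_coef (L : syllables) : G := if L is (_, _, r) :: _ then r else 1.

Fixpoint normal (L : syllables) : Prop :=
  if L is (i, e, r) :: L' then [/\ hnn_repr i e r = r, ~ cancels i e r L' & normal L']
  else True.

Definition nf_mulH x (w : nform) : nform := (x ** w.1, w.2).

(* t_i^e g = hnn_iso e a t_i^e r for g = a r with a in the associated subgroup. *)
Definition nf_mulT i e (w : nform) : nform :=
  let r := hnn_repr i e w.1 in
  let y := hnn_iso e (w.1 ** r^-1) in
  if excluded_middle_informative (cancels i e r w.2) then (y ** head_coef w.2, behead w.2)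
  else (y, (i, e, r) :: w.2).

Definition nf_act_letter (l : A1_letter H) (w : nform) : nform :=
  match l with
  | LH a b => nf_mulH (a, b) w
  | LT i => nf_mulT i true w
  | LTi i => nf_mulT i false w
  end.

Definition nf_act (u : A1_word H) (w : nform) : nform := foldr nf_act_letter w u.

Lemma nf_mulT_cancel i e g L : cancels i e (hnn_repr i e g) L ->
  nf_mulT i e (g, L) = (hnn_iso e (g ** (hnn_repr i e g)^-1) ** head_coef L, behead L).
Proof. by rewrite /nf_mulT; case: excluded_middle_informative. Qed.

Lemma nf_mulT_push i e g L : ~ cancels i e (hnn_repr i e g) L ->
  nf_mulT i e (g, L) = (hnn_iso e (g ** (hnn_repr i e g)^-1), (i, e, hnn_repr i e g) :: L).
Proof. by rewrite /nf_mulT; case: excluded_middle_informative. Qed.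

Lemma normal_mulT i e w : normal w.2 -> normal (nf_mulT i e w).2.
Proof.
case: w => g L /= nL; rewrite /nf_mulT; case: excluded_middle_informative => /= canc.
  by case: L nL canc => [|[[j e'] r'] L] /= [] //; case.
by split=> //; apply: hnn_repr_idem.
Qed.

Lemma nf_mulTK i e w : normal w.2 -> nf_mulT i (~~ e) (nf_mulT i e w) = w.
Proof.
case: w => g L /= nL.
have A_y : hnn_assoc i (~~ e) (hnn_iso e (g ** (hnn_repr i e g)^-1)).
  by rewrite hnn_assoc_iso; apply: hnn_reprP.
have [canc | no_canc] := classic (cancels i e (hnn_repr i e g) L).
  rewrite (nf_mulT_cancel canc); case: L nL canc => [|[[j e'] r'] L] /=; first by move=> _ [_ []].
  move=> [r'_repr no_canc' _] [r1 [ji ee]]; subst j e'.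
  rewrite nf_mulT_push hnn_reprM // r'_repr //.
  by rewrite -gmulA mulgV mulg1 hnn_isoK r1 invg1 mulg1.
have r1 : hnn_repr i (~~ e) (hnn_iso e (g ** (hnn_repr i e g)^-1)) = 1.
  exact: hnn_repr_id.
rewrite (nf_mulT_push no_canc) nf_mulT_cancel r1; last by split; rewrite /= ?negbK.
by rewrite invg1 mulg1 hnn_isoK -gmulA gmulV mulg1.
Qed.

Lemma nf_mulT_conj i e x w : normal w.2 -> hnn_assoc i e x ->
  nf_mulT i e (nf_mulH x (nf_mulT i (~~ e) w)) = nf_mulH (hnn_iso e x) w.
Proof.
case: w => g L /= nL A_x.
have A_y : hnn_assoc i e (hnn_iso (~~ e) (g ** (hnn_repr i (~~ e) g)^-1)).
  by rewrite -[in hnn_assoc _ e](negbK e) hnn_assoc_iso; apply: hnn_reprP.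
have A_xy := hnn_assocM A_x A_y.
have [canc | no_canc] := classic (cancels i (~~ e) (hnn_repr i (~~ e) g) L).
  rewrite (nf_mulT_cancel canc); case: L nL canc => [|[[j e'] r'] L] /=; first by move=> _ [_ []].
  move=> [r'_repr no_canc' _] [r1 [ji ee]]; subst j e'; rewrite negbK in r'_repr no_canc'.
  rewrite /nf_mulH /= gmulA nf_mulT_push hnn_reprM // r'_repr //.
  by rewrite -gmulA mulgV mulg1 (hnn_isoM A_x A_y) hnn_isoKV r1 invg1 mulg1 negbK.
have r1 : hnn_repr i e (x ** hnn_iso (~~ e) (g ** (hnn_repr i (~~ e) g)^-1)) = 1.
  exact: hnn_repr_id.
rewrite (nf_mulT_push no_canc) /nf_mulH /= nf_mulT_cancel r1 //.
by rewrite invg1 mulg1 (hnn_isoM A_x A_y) hnn_isoKV -!gmulA gmulV mulg1.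
Qed.

End NormalForms.

Section Action.
Variable H : AGroup.
Local Notation G := (prod_group H).
Local Notation "1" := (gone G).
Implicit Types (u v : A1_word H) (w : nform H).

Lemma nf_act_cat u v w : nf_act (u ++ v) w = nf_act u (nf_act v w).
Proof. exact: foldr_cat. Qed.

Lemma normal_act u w : normal w.2 -> normal (nf_act u w).2.
Proof. by elim: u => [|[a b|i|i] u IH] //= /IH; try apply: normal_mulT. Qed.

Lemma nf_act_rel u v w : A1_rel u v -> normal w.2 -> nf_act u w = nf_act v w.
Proof.
case=> {u v} [a b c d | | i | i | i f k Ff Ck] nw /=.
- by rewrite /nf_mulH gmulA.
- by rewrite /nf_mulH -prod_oneE gmul1; case: w nw.
- exact: (nf_mulTK i false).
- exact: (nf_mulTK i true).
- have A_fk : hnn_assoc i true (hnn_emb true (f, k)) by rewrite /hnn_assoc hnn_unembK.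
  have := nf_mulT_conj nw A_fk; rewrite /hnn_iso hnn_unembK; apply.
Qed.

Lemma nf_act_eq u v w : A1_eq u v -> normal w.2 -> nf_act u w = nf_act v w.
Proof.
move=> uv; elim: uv w => {u v} [u | u v _ IH | u v v' _ IH1 _ IH2 | x u v y uv] w nw.
- by [].
- by rewrite IH.
- by rewrite IH1 // IH2.
- by rewrite !nf_act_cat (nf_act_rel uv) //; apply: normal_act.
Qed.

Definition nf1 : nform H := (1, [::]).

Lemma A1_eq_LH_inj (a b c d : H) : A1_eq [:: LH a b] [:: LH c d] -> a = c /\ b = d.
Proof.
move/(@nf_act_eq _ _ nf1)/(_ I); rewrite /= /nf_mulH /= prod_oneE !prod_mulE /= !mulg1.
by case.
Qed.

End Action.

Section Britton.
Variable H : AGroup.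
Local Notation G := (prod_group H).
Implicit Types (i : FGA H) (e : bool) (g : G) (M : syllables H).

Definition tletter i e : A1_letter H := if e then LT i else LTi i.
Definition hletter g : A1_letter H := LH g.1 g.2.

Fixpoint syl_word M : A1_word H :=
  if M is (i, e, g) :: M' then tletter i e :: hletter g :: syl_word M' else [::].

Definition nf_word (w : nform H) : A1_word H := hletter w.1 :: syl_word w.2.

Lemma syl_word_cat M M' : syl_word (M ++ M') = syl_word M ++ syl_word M'.
Proof. by elim: M => [|[[i e] g] M IH] //=; rewrite IH. Qed.

Definition head_key M : option (FGA H * bool) :=
  if M is (j, e', _) :: _ then Some (j, e') else None.

Definition next_key M o : option (FGA H * bool) := if M is [::] then o else head_key M.

(* [pinch i e g (Some (j, e'))]: the subword t_i^e g t_j^e' collapses into H x H. *)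
Definition pinch i e g (o : option (FGA H * bool)) : Prop :=
  if o is Some (j, e') then [/\ j = i, e' = ~~ e & hnn_assoc i e g] else False.

(* [o] is the key of the syllable that will follow [M]. *)
Fixpoint reduced_upto M o : Prop :=
  if M is (i, e, g) :: M' then ~ pinch i e g (next_key M' o) /\ reduced_upto M' o else True.

Definition reduced M : Prop := reduced_upto M None.

Lemma nf_act_syl_cons i e g M w :
  nf_act (syl_word ((i, e, g) :: M)) w = nf_mulT i e (nf_mulH g (nf_act (syl_word M) w)).
Proof. by case: e; case: g. Qed.

Lemma nf_act_reduced i e g M : reduced ((i, e, g) :: M) ->
  exists h r L, nf_act (syl_word ((i, e, g) :: M)) (nf1 H) = (h, (i, e, r) :: L) /\
                hnn_assoc i (~~ e) h.
Proof.
elim: M i e g => [|[[j e'] g'] M IH] i e g.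
  move=> _; rewrite nf_act_syl_cons nf_mulT_push; last by case=> _ [].
  by do 3!eexists; split; [by [] | rewrite hnn_assoc_iso; apply: hnn_reprP].
move=> [no_pinch red_M]; have [h [r [L [act_M A_h]]]] := IH _ _ _ red_M.
rewrite nf_act_syl_cons act_M nf_mulT_push /=.
  by do 3!eexists; split; [by [] | rewrite hnn_assoc_iso; apply: hnn_reprP].
move=> [/hnn_repr_eq1 A_gh [ji ee]]; subst j e'; apply: no_pinch; split=> //.
by rewrite negbK in A_h; apply: subg_cancelr A_h A_gh; [apply: hnn_assocM | apply: hnn_assocV].
Qed.

Lemma reduced_syl_word_neq1 M : reduced M -> M <> [::] -> ~ A1_eq (syl_word M) [::].
Proof.
case: M => [|[[i e] g] M] // red_M _ /(@nf_act_eq _ _ _ (nf1 H)) /(_ I).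
by have [h [r [L [-> _]]]] := nf_act_reduced red_M.
Qed.

End Britton.

Section Reduction.
Variable H : AGroup.
Local Notation G := (prod_group H).
Local Notation "1" := (gone G).
Implicit Types (i : FGA H) (e : bool) (g x y z : G) (M : syllables H) (u v : A1_word H).

Lemma hletterM x y : A1_eq [:: hletter x; hletter y] [:: hletter (x ** y)].
Proof. exact/A1_rel_eq/rel_HH. Qed.

Lemma hletter1 : A1_eq [:: hletter 1] [::].
Proof. exact/A1_rel_eq/rel_H1. Qed.

Lemma nf_word_exists u : exists w, A1_eq u (nf_word w).
Proof.
elim: u => [|l u [[g M] IH]]; first by exists (1, [::]); apply/A1_sym/hletter1.
have {}IH := A1_eq_catl [:: l] IH; rewrite cat1s in IH.
case: l IH => [a b|i|i] IH.
- exists (((a, b) : G) ** g, M); apply: A1_trans IH _.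
  exact (A1_eq_catr (syl_word M) (hletterM (a, b) g)).
- exists (1, (i, true, g) :: M); apply: A1_trans IH _.
  exact/A1_sym/(A1_eq_catr (LT i :: hletter g :: syl_word M) hletter1).
- exists (1, (i, false, g) :: M); apply: A1_trans IH _.
  exact/A1_sym/(A1_eq_catr (LTi i :: hletter g :: syl_word M) hletter1).
Qed.

Fixpoint mul_last M z : syllables H :=
  match M with
  | [::] => [::]
  | [:: (i, e, g)] => [:: (i, e, g ** z)]
  | s :: M' => s :: mul_last M' z
  end.

Lemma size_mul_last M z : size (mul_last M z) = size M.
Proof. by elim: M => [|[[i e] g] [|s M] IH] //=; rewrite IH. Qed.

Lemma syl_word_mul_last M z : M <> [::] ->
  A1_eq (syl_word M ++ [:: hletter z]) (syl_word (mul_last M z)).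
Proof.
elim: M => [|[[i e] g] [|s M] IH] // _; first exact (A1_eq_catl [:: tletter i e] (hletterM g z)).
exact (A1_eq_catl [:: tletter i e; hletter g] (IH ltac:(done))).
Qed.

Lemma tletter_conj i e x : hnn_assoc i e x ->
  A1_eq [:: tletter i e; hletter x; tletter i (~~ e)] [:: hletter (hnn_iso e x)].
Proof.
rewrite /hnn_assoc => A_x; rewrite -(hnn_embK e x) /hnn_iso hnn_unembK.
case: (hnn_unemb e x) A_x => f k [Ff Ck]; case: e => /=; first exact/A1_rel_eq/rel_HNN.
apply: A1_trans (A1_sym (A1_eq_ctx [:: LTi i] [:: LT i] (A1_rel_eq (rel_HNN Ff Ck)))) _ => /=.
apply: A1_trans (A1_eq_ctx [::] [:: hletter (hnn_emb true (f, k)); LTi i; LT i]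
                   (A1_rel_eq (rel_TiT i))) _.
exact (A1_eq_ctx [:: hletter (hnn_emb true (f, k))] [::] (A1_rel_eq (rel_TiT i))).
Qed.

Lemma pinch_shorten M1 i e g g' M2 : hnn_assoc i e g ->
  let M := M1 ++ (i, e, g) :: (i, ~~ e, g') :: M2 in
  exists w, size w.2 < size M /\ A1_eq (syl_word M) (nf_word w).
Proof.
move=> A_g M; set z := hnn_iso e g ** g'.
have pinched : A1_eq (syl_word ((i, e, g) :: (i, ~~ e, g') :: M2)) (hletter z :: syl_word M2).
  apply: A1_trans (A1_eq_catr (hletter g' :: syl_word M2) (tletter_conj A_g)) _.
  exact (A1_eq_catr (syl_word M2) (hletterM _ g')).
case: M1 @M => [|s M1] M.
  by exists (z, M2); split=> //=; rewrite ltnS leqnSn.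
exists (1, mul_last (s :: M1) z ++ M2); split.
  by rewrite size_cat size_mul_last /= size_cat /= !addnS ltnS addSn leqW.
apply: A1_trans (_ : A1_eq _ (syl_word (s :: M1) ++ hletter z :: syl_word M2)) _.
  by rewrite /M syl_word_cat; apply: A1_eq_catl.
rewrite -[hletter z :: _]cat1s catA /nf_word syl_word_cat -[hletter _ :: _]cat1s.
apply: A1_trans (A1_eq_catr _ (syl_word_mul_last _ _)) _ => //.
exact/A1_sym/(A1_eq_catr _ hletter1).
Qed.

End Reduction.

Section Torsion.
Variable H : AGroup.
Local Notation G := (prod_group H).
Implicit Types (g : G) (M : syllables H) (u v : A1_word H).

Lemma next_key_cat M M' o : next_key (M ++ M') o = next_key M (next_key M' o).
Proof. by case: M => [|[[i e] g] M]. Qed.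

Lemma reduced_upto_cat M M' o :
  reduced_upto (M ++ M') o <-> reduced_upto M (next_key M' o) /\ reduced_upto M' o.
Proof.
elim: M => [|[[i e] g] M IH] /=; first tauto.
by rewrite next_key_cat IH; tauto.
Qed.

Lemma reduced_rot s M : reduced (s :: M) -> reduced (M ++ [:: s]) -> reduced ((s :: M) ++ s :: M).
Proof.
case: s => [[i e] g] red_sM /reduced_upto_cat [red_M _].
apply/reduced_upto_cat; split=> //=; split=> //.
by case: M red_sM {red_M} => [|s M] [no_pinch _] // {no_pinch} [_ + _]; case: e.
Qed.

Lemma reduced_pow M n : reduced (M ++ M) -> reduced (flatten (nseq n M)).
Proof.
move=> /reduced_upto_cat [red_MM red_M].
elim: n => [|n IH] //=; apply/reduced_upto_cat; split=> //.
by case: n {IH} => [|n] //=; rewrite next_key_cat; case: M red_MM {red_M}.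
Qed.

Lemma syl_word_pow M n : syl_word (flatten (nseq n M)) = A1_pow (syl_word M) n.
Proof. by elim: n => [|n IH] //=; rewrite syl_word_cat IH. Qed.

Lemma not_reduced_pinch M : ~ reduced M ->
  exists M1 i e g g' M2, M = M1 ++ (i, e, g) :: (i, ~~ e, g') :: M2 /\ hnn_assoc i e g.
Proof.
elim: M => [|[[i e] g] M IH]; first by move/(_ I).
rewrite /reduced /= -/(reduced M) => not_red.
have [red_M | /IH [M1 [j [e' [h [h' [M2 [-> A_h]]]]]]]] := classic (reduced M); last first.
  by exists ((i, e, g) :: M1), j, e', h, h', M2.
have : pinch i e g (next_key M None) by apply: NNPP => no_pinch; apply: not_red.
by case: M {IH not_red red_M} => [|[[j e'] g'] M2] //= [-> -> A_g]; exists [::], i, e, g, g', M2.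
Qed.

Lemma not_reduced_shorten M : ~ reduced M ->
  exists w : nform H, size w.2 < size M /\ A1_eq (syl_word M) (nf_word w).
Proof. by move/not_reduced_pinch=> [M1 [i [e [g [g' [M2 [-> A_g]]]]]]]; apply: pinch_shorten. Qed.

Lemma not_cyc_reduced_shorten M : M <> [::] -> ~ reduced (M ++ M) ->
  exists w : nform H, size w.2 < size M /\ same_exponents (syl_word M) (nf_word w).
Proof.
move=> M0 not_red2; have [red_M | not_red] := classic (reduced M); last first.
  have [w [w_lt Mw]] := not_reduced_shorten not_red.
  by exists w; split=> //; apply: A1_eq_same_exponents.
case: M M0 red_M not_red2 => [|s M] // _ red_sM not_red2.
have [|w [w_lt Mw]] := @not_reduced_shorten (M ++ [:: s]).
  by move=> red_Ms; apply/not_red2/reduced_rot.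
exists w; split; first by rewrite size_cat addn1 in w_lt.
move=> m; rewrite -(A1_eq_same_exponents Mw) syl_word_cat.
by case: s {red_sM not_red2 w_lt Mw} => [[i e] g]; apply: (same_exponents_rot [:: _; _]).
Qed.

Lemma cyc_reduced_not_torsion M : M <> [::] -> reduced (M ++ M) -> ~ torsion (syl_word M).
Proof.
move=> M0 red_MM [m m_gt0]; rewrite /pow_eq1 -syl_word_pow.
apply: reduced_syl_word_neq1; first exact: reduced_pow.
by case: m m_gt0 => //= m _; case: M M0 {red_MM}.
Qed.

Lemma torsion_same_exponents u v : same_exponents u v -> torsion u -> torsion v.
Proof. by move=> uv [m m_gt0 /uv]; exists m. Qed.

Lemma nf_word_rot g M : M <> [::] -> same_exponents (nf_word (g, M)) (syl_word (mul_last M g)).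
Proof.
move=> M0 m; rewrite /nf_word -cat1s same_exponents_rot.
exact: (A1_eq_same_exponents (syl_word_mul_last g M0) m).
Qed.

Lemma torsion_nf_base n (w : nform H) : size w.2 <= n -> torsion (nf_word w) ->
  exists z : G, same_exponents (nf_word w) [:: hletter z].
Proof.
elim: n w => [|n IH] [g [|s M]] //= size_le tor; try by exists g.
have M'0 : mul_last (s :: M) g <> [::] by move/(congr1 size); rewrite size_mul_last.
have rot := @nf_word_rot g (s :: M) ltac:(done).
have [red | not_red] := classic (reduced (mul_last (s :: M) g ++ mul_last (s :: M) g)).
  by case: (cyc_reduced_not_torsion M'0 red); apply: torsion_same_exponents tor; apply: rot.
have [w [w_lt same_w]] := not_cyc_reduced_shorten M'0 not_red.
have tor_w : torsion (nf_word w).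
  by apply: torsion_same_exponents tor => m; rewrite rot same_w.
have [|z same_z] := IH w _ tor_w.
  by rewrite size_mul_last in w_lt; apply: leq_trans w_lt size_le.
by exists z => m; rewrite rot same_w same_z.
Qed.

Theorem torsion_conj_base u : torsion u -> exists z : G, same_exponents u [:: hletter z].
Proof.
have [w uw] := nf_word_exists u; have same_uw := A1_eq_same_exponents uw.
move/(torsion_same_exponents same_uw)/(torsion_nf_base (leqnn _)) => [z same_z].
by exists z => m; rewrite same_uw same_z.
Qed.

End Torsion.

Lemma pow_eq1_LH (H : AGroup) (a b : H) m :
  pow_eq1 [:: LH a b] m <-> gpow a m = gone H /\ gpow b m = gone H.
Proof.
have pow_LH : A1_eq (A1_pow [:: LH a b] m) [:: LH (gpow a m) (gpow b m)].
  elim: m => [|m IH]; first exact/A1_sym/A1_rel_eq/rel_H1.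
  exact: A1_trans (A1_eq_catl [:: LH a b] IH) (A1_rel_eq (rel_HH _ _ _ _)).
have LH11 : A1_eq [:: LH (gone H) (gone H)] [::] by apply/A1_rel_eq/rel_H1.
split=> [ab_m | [a_m b_m]]; last by apply: A1_trans pow_LH _; rewrite a_m b_m.
by apply: A1_eq_LH_inj; apply: A1_trans (A1_sym pow_LH) (A1_trans ab_m (A1_sym LH11)).
Qed.

Theorem lemma4p7 (H : AGroup) (p k : nat) (hp : prime p) :
  (exists w : A1_word H, A1_has_order w (p ^ k)) <->
  (exists h : H, has_order h (p ^ k)).
Proof.
split=> [[w [pk_gt0 [w_pk w_min]]] | [h [pk_gt0 [h_pk h_min]]]].
  have [[a b] same] := torsion_conj_base (ex_intro2 _ _ (p ^ k) pk_gt0 w_pk).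
  have ab_m m : pow_eq1 w m <-> gpow a m = gone H /\ gpow b m = gone H.
    by rewrite same; apply: pow_eq1_LH.
  have [a_pk b_pk] := (ab_m _).1 w_pk.
  by apply: (pair_order_pfactor hp a_pk b_pk) => m m_gt0 m_lt /ab_m; apply: w_min.
exists [:: LH h (gone H)]; split=> //; split=> [|m m_gt0 m_lt /pow_eq1_LH [h_m _]].
  by apply/pow_eq1_LH; rewrite gpow1n.
exact: h_min h_m.
Qed.
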